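(* If a graph $G$ has a min-max clique covering that satisfies simple intersection, then the compressed cliques graph of $G$ is unique up to isomorphism; that is, the compressed cliques graphs of $G$ constructed from any two min-max clique coverings of $G$ satisfying simple intersection are isomorphic.
   Context: A clique covering of $G$ is a set of cliques such that every edge lies in at least one of them; $\operatorname{cc}(G)$ is the minimum size of one. A min-max clique covering is a clique covering of size $\operatorname{cc}(G)$ consisting of maximal cliques. It has simple intersection if no three distinct cliques of it have a common vertex. Given such a covering $\{C_1,\dots,C_\ell\}$, for distinct $i,j$ put $C_{i,j}=C_i\cap C_j$ and $C_{i,i}=C_i\setminus\bigcup_{j\ne i}C_j$. The compressed cliques graph with respect to this covering has one vertex $v_{i,j}$ for each non-empty set $C_{i,j}$ (including $i=j$), and $v_{i,j}$, $v_{i',j'}$ are adjacent iff $\{i,j\}\cap\{i',j'\}\neq\emptyset$. *)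

(* A simple graph is a symmetric irreflexive relation e on a finType T. *)
From mathcomp Require Import all_boot.
Set Implicit Arguments. Unset Strict Implicit. Unset Printing Implicit Defensive.

Section Graphs.
Variables (T : finType) (e : rel T).

Definition is_clique (A : {set T}) : Prop :=
  forall x y, x \in A -> y \in A -> x != y -> e x y.

Definition is_maximal_clique (A : {set T}) : Prop :=
  is_clique A /\ forall B : {set T}, is_clique B -> A \subset B -> B = A.

Definition is_clique_covering (K : {set {set T}}) : Prop :=
  (forall A, A \in K -> is_clique A) /\
  (forall x y, e x y -> exists2 A, A \in K & (x \in A) && (y \in A)).

Definition is_min_max_clique_covering (K : {set {set T}}) : Prop :=
  [/\ is_clique_covering K,
      (forall K' : {set {set T}}, is_clique_covering K' -> #|K| <= #|K'|) &
      (forall A, A \in K -> is_maximal_clique A)].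

Definition simple_intersection (K : {set {set T}}) : Prop :=
  forall A B C, A \in K -> B \in K -> C \in K ->
    A != B -> B != C -> A != C -> A :&: B :&: C = set0.

Definition Cpart (K : {set {set T}}) (A B : {set T}) : {set T} :=
  if A == B then A :\: \bigcup_(D in K | D != A) D else A :&: B.

(* Vertices of the compressed cliques graph: the unordered index pairs {A,B}
   (with A = B allowed, giving the singleton {A}) such that C_{A,B} is nonempty. *)
Definition ccg_vertices (K : {set {set T}}) : {set {set {set T}}} :=
  [set p | [exists A in K, exists B in K,
              (p == [set A; B]) && (Cpart K A B != set0)]].

Definition ccg_adj (p q : {set {set T}}) : bool :=
  (p != q) && (p :&: q != set0).

Definition ccg_isomorphic (K1 K2 : {set {set T}}) : Prop :=
  exists f : {set {set T}} -> {set {set T}},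
    [/\ {in ccg_vertices K1 &, injective f},
        f @: ccg_vertices K1 = ccg_vertices K2 &
        {in ccg_vertices K1 &, forall p q, ccg_adj (f p) (f q) = ccg_adj p q}].

End Graphs.

From mathcomp Require Import all_boot.
Set Implicit Arguments. Unset Strict Implicit. Unset Printing Implicit Defensive.

(* For a vertex x let C(x) be the set of cliques of the covering containing x.
   Under simple intersection C(x) has one or two elements, and the vertices of
   the compressed cliques graph are exactly the sets C(x) for non-isolated x;
   moreover C(x) and C(z) meet iff z lies in the closed neighbourhood N[x].
   The heart of the proof is that C(x) = C(y) iff N[x] = N[y]. Suppose
   N[x] = N[y] but some A in C(x) misses y, and let D be a clique containing
   both x and y. Every vertex of A lies in N[y], hence in a clique of C(y).
   Either C(y) = {D}, and A is a proper subclique of D, against maximality;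
   or C(x) = {A, D} and C(y) = {D, C}, and then A :|: C is a clique, so
   replacing A and C by it gives a smaller covering, against minimality.
   So the compressed cliques graph is described by G alone, and C1(x) |-> C2(x)
   is an isomorphism. *)

Lemma imset_transport (aT rT : finType) (D : {set aT}) (g1 g2 : aT -> rT) :
    {in D &, forall x y, (g1 x == g1 y) = (g2 x == g2 y)} ->
  exists f : rT -> rT,
    [/\ {in g1 @: D &, injective f}, f @: (g1 @: D) = g2 @: D
      & {in D, forall x, f (g1 x) = g2 x}].
Proof.
move=> eq_g.
pose f p := if [pick x in D | g1 x == p] is Some x then g2 x else p.
have f_g1 : {in D, forall x, f (g1 x) = g2 x}.
  move=> x xD; rewrite /f; case: pickP => [x' /andP[x'D /eqP g1x'] | /(_ x)].
    by apply/eqP; rewrite -eq_g // g1x'.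
  by rewrite xD eqxx.
exists f; split=> //.
- move=> _ _ /imsetP[x xD ->] /imsetP[y yD ->].
  by rewrite !f_g1 // => /eqP; rewrite -eq_g // => /eqP.
- apply/setP=> q; apply/imsetP/imsetP => [[_ /imsetP[x xD ->] ->] | [x xD ->]].
    by exists x; rewrite ?f_g1.
  by exists (g1 x); rewrite ?f_g1 ?imset_f.
Qed.

Section CompressedCliquesGraph.

Variables (T : finType) (e : rel T).
Hypotheses (e_sym : symmetric e) (e_irr : irreflexive e).

Definition cliques_at (K : {set {set T}}) (x : T) : {set {set T}} :=
  [set A in K | x \in A].

Definition closed_nbhd (x : T) : {set T} := [set z | (z == x) || e x z].

Definition nonisolated : {set T} := [set x | [exists y, e x y]].

Lemma clique_setU (A C D : {set T}) :
    is_clique e A -> is_clique e C -> is_clique e D ->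
    A \subset D :|: C -> C \subset A :|: D -> is_clique e (A :|: C).
Proof.
move=> cA cC cD /subsetP sA /subsetP sC u v.
have cross a c : a \in A -> c \in C -> a != c -> e a c.
  move=> aA cC'; have := sC c cC'; rewrite inE => /orP[cA'|cD']; first exact: cA.
  have := sA a aA; rewrite inE => /orP[aD|aC]; [exact: cD | exact: cC].
rewrite !inE => /orP[uA|uC] /orP[vA|vC] nuv; first exact: cA.
- exact: cross.
- by rewrite e_sym; apply: cross; rewrite // eq_sym.
- exact: cC.
Qed.

Variable K : {set {set T}}.
Hypotheses (K_min_max : is_min_max_clique_covering e K)
           (K_simple : simple_intersection K).

Lemma min_covering_clique_setU (A C : {set T}) :
  A \in K -> C \in K -> A != C -> ~ is_clique e (A :|: C).
Proof.
have [[K_cl K_cov] K_min _] := K_min_max.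
move=> AK CK nAC cAC.
pose K' := (A :|: C) |: (K :\ A :\ C).
suff cov' : is_clique_covering e K'.
  have := K_min K' cov'.
  rewrite (cardsD1 A K) AK (cardsD1 C (K :\ A)) !inE eq_sym nAC CK.
  by rewrite cardsU1 !add1n; case: (_ \notin _); rewrite ?ltnn ?ltnNge ?leqnSn.
split=> [B | x y exy].
  by rewrite !inE => /orP[/eqP -> // | /andP[_ /andP[_ /K_cl]]].
have [B BK /andP[xB yB]] := K_cov x y exy.
have [BAC | nBAC] := boolP ((B == A) || (B == C)).
  exists (A :|: C); first by rewrite !inE eqxx.
  by case/orP: BAC => /eqP <-; rewrite !inE xB yB ?orbT.
exists B; last by rewrite xB yB.
by move: nBAC; rewrite negb_or !inE BK => /andP[-> ->]; rewrite orbT.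
Qed.

Lemma cliques_at_sub_pair x (A B : {set T}) :
    A \in cliques_at K x -> B \in cliques_at K x -> A != B ->
  cliques_at K x \subset [set A; B].
Proof.
rewrite !inE => /andP[AK xA] /andP[BK xB] nAB.
apply/subsetP => D; rewrite !inE => /andP[DK xD].
apply: contraT; rewrite negb_or => /andP[nDA nDB].
have := K_simple AK BK DK nAB; rewrite eq_sym nDB eq_sym nDA => /(_ isT isT).
by move/setP/(_ x); rewrite !inE xA xB xD.
Qed.

Lemma cliques_at_pair x (A B : {set T}) :
    A \in cliques_at K x -> B \in cliques_at K x -> A != B ->
  cliques_at K x = [set A; B].
Proof.
move=> Ax Bx nAB; apply/eqP.
by rewrite eqEsubset (cliques_at_sub_pair Ax Bx nAB) subUset !sub1set Ax Bx.
Qed.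

Lemma cliques_at_neq0 x : (cliques_at K x != set0) = (x \in nonisolated).
Proof.
have [[K_cl K_cov] K_min _] := K_min_max.
rewrite inE; apply/idP/existsP => [/set0Pn[A] | [y /K_cov[A AK /andP[xA _]]]];
  last by apply/set0Pn; exists A; rewrite inE AK xA.
rewrite inE => /andP[AK xA].
case: (pickP [pred y in A | y != x]) => [y /andP[yA nyx] | A_x].
  by exists y; apply: (K_cl A AK); rewrite // eq_sym.
have A_only_x u : u \in A -> u = x.
  by move=> uA; apply/eqP; apply: contraFT (A_x u) => nux; rewrite /= uA.
suff cov' : is_clique_covering e (K :\ A).
  by have := K_min _ cov'; rewrite (cardsD1 A K) AK add1n ltnn.
split=> [B | u v euv]; first by rewrite !inE => /andP[_ /K_cl].
have [B BK /andP[uB vB]] := K_cov u v euv.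
have [BA | nBA] := eqVneq B A; last by exists B; rewrite ?inE ?nBA ?BK ?uB.
by move: euv; rewrite (A_only_x u) -?BA // (A_only_x v) -?BA // e_irr.
Qed.

Lemma closed_nbhd_cliques_at x z : x \in nonisolated ->
  (z \in closed_nbhd x) = (cliques_at K x :&: cliques_at K z != set0).
Proof.
have [[K_cl K_cov] _ _] := K_min_max.
rewrite -cliques_at_neq0 inE => Cx_neq0.
have [-> | nzx] /= := eqVneq z x; first by rewrite setIid.
apply/idP/set0Pn => [/K_cov[A AK /andP[xA zA]] | [A]].
  by exists A; rewrite !inE AK xA zA.
rewrite !inE => /andP[/andP[AK xA] /andP[_ zA]].
by apply: (K_cl A AK); rewrite // eq_sym.
Qed.

Lemma ccg_vertices_cliques_at : ccg_vertices K = cliques_at K @: nonisolated.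
Proof.
apply/setP => p; rewrite inE; apply/idP/imsetP.
  case/existsP => A /andP[AK /existsP[B /andP[BK /andP[/eqP -> Cp_neq0]]]].
  move: Cp_neq0; rewrite /Cpart; have [<- | nAB] := eqVneq A B => /set0Pn[x].
    rewrite inE => /andP[xnU xA]; exists x.
      by rewrite -cliques_at_neq0; apply/set0Pn; exists A; rewrite inE AK.
    rewrite setUid; apply/setP => D; rewrite !inE.
    have [-> | nDA] := eqVneq D A; first by rewrite AK xA.
    apply/esym/negbTE; apply: contra xnU => /andP[DK xD].
    by apply/bigcupP; exists D; rewrite ?inE ?DK.
  rewrite inE => /andP[xA xB].
  have Ax : A \in cliques_at K x by rewrite inE AK xA.
  have Bx : B \in cliques_at K x by rewrite inE BK xB.
  exists x; first by rewrite -cliques_at_neq0; apply/set0Pn; exists A.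
  by rewrite (cliques_at_pair Ax Bx nAB).
case=> x; rewrite -cliques_at_neq0 => /set0Pn[A Ax] ->.
have [AK xA] : A \in K /\ x \in A by move: Ax; rewrite inE => /andP[].
case: (pickP [pred B in cliques_at K x | B != A]) => [B /andP[Bx nBA] | Cx_A].
  have [BK xB] : B \in K /\ x \in B by move: Bx; rewrite inE => /andP[].
  apply/existsP; exists A; rewrite AK; apply/existsP; exists B; rewrite BK /=.
  have nAB : A != B by rewrite eq_sym.
  rewrite /Cpart (negbTE nAB) (cliques_at_pair Ax Bx nAB) eqxx /=.
  by apply/set0Pn; exists x; rewrite inE xA xB.
have Cx1 : cliques_at K x = [set A].
  apply/setP => D; rewrite inE; have [-> // | nDA] := eqVneq D A.
  by apply: negbTE; apply: contraFN (Cx_A D) => /= ->.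
apply/existsP; exists A; rewrite AK; apply/existsP; exists A.
rewrite AK setUid Cx1 eqxx /Cpart eqxx; apply/set0Pn; exists x.
rewrite inE xA andbT; apply/bigcupP => -[D /andP[DK nDA] xD].
by move/setP/(_ D): Cx1; rewrite !inE DK xD (negbTE nDA).
Qed.

Lemma cliques_at_cover_nbhd x y (A : {set T}) :
    x \in nonisolated -> y \in nonisolated -> closed_nbhd x = closed_nbhd y ->
    A \in cliques_at K x ->
  forall z, z \in A -> exists2 B, B \in cliques_at K y & z \in B.
Proof.
move=> xN yN Nxy Ax z zA.
have : z \in closed_nbhd x.
  rewrite closed_nbhd_cliques_at //; apply/set0Pn; exists A.
  by move: Ax; rewrite !inE zA => /andP[-> ->].
rewrite Nxy closed_nbhd_cliques_at // => /set0Pn[B].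
by rewrite !inE => /andP[/andP[BK yB] /andP[_ zB]]; exists B; rewrite ?inE ?BK.
Qed.

Lemma cliques_at_subset x y :
    x \in nonisolated -> y \in nonisolated -> closed_nbhd x = closed_nbhd y ->
  cliques_at K x \subset cliques_at K y.
Proof.
have [[K_cl _] _ K_max] := K_min_max.
move=> xN yN Nxy; apply/subsetP => A Ax; apply: contraT => Ay.
have AK : A \in K by move: Ax; rewrite inE => /andP[].
have cover_A := cliques_at_cover_nbhd xN yN Nxy Ax.
have : y \in closed_nbhd x by rewrite Nxy inE eqxx.
rewrite closed_nbhd_cliques_at // => /set0Pn[D]; rewrite inE => /andP[Dx Dy].
have DK : D \in K by move: Dx; rewrite inE => /andP[].
have nAD : A != D by apply: contraNneq Ay => ->.
case: (pickP [pred C in cliques_at K y | C != D]) => [C /andP[Cy nCD] | Cy_D].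
  have CK : C \in K by move: Cy; rewrite inE => /andP[].
  have nAC : A != C by apply: contraNneq Ay => ->.
  have nDC : D != C by rewrite eq_sym.
  have cover_C := cliques_at_cover_nbhd yN xN (esym Nxy) Cy.
  have Cx_eq := cliques_at_pair Ax Dx nAD; have Cy_eq := cliques_at_pair Dy Cy nDC.
  have [] := min_covering_clique_setU AK CK nAC.
  apply: (clique_setU (K_cl A AK) (K_cl C CK) (K_cl D DK)); apply/subsetP => z.
    by move=> /cover_A[B]; rewrite Cy_eq !inE => /orP[] /eqP -> ->; rewrite ?orbT.
  by move=> /cover_C[B]; rewrite Cx_eq !inE => /orP[] /eqP -> ->; rewrite ?orbT.
have AD : A \subset D.
  apply/subsetP => z /cover_A[B By zB].
  by have [BD | nBD] := eqVneq B D; [rewrite -BD | have := Cy_D B; rewrite /= By nBD].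
by case: (K_max A AK) => _ /(_ D (K_cl D DK) AD) DA; rewrite DA eqxx in nAD.
Qed.

Lemma eq_cliques_at x y : x \in nonisolated -> y \in nonisolated ->
  (cliques_at K x == cliques_at K y) = (closed_nbhd x == closed_nbhd y).
Proof.
move=> xN yN; apply/eqP/eqP => [Cxy | Nxy].
  by apply/setP => z; rewrite !closed_nbhd_cliques_at // Cxy.
by apply/eqP; rewrite eqEsubset !cliques_at_subset.
Qed.

Lemma ccg_adj_cliques_at x y : x \in nonisolated -> y \in nonisolated ->
  ccg_adj (cliques_at K x) (cliques_at K y)
    = (closed_nbhd x != closed_nbhd y) && (y \in closed_nbhd x).
Proof.
by move=> xN yN; rewrite /ccg_adj eq_cliques_at // closed_nbhd_cliques_at.
Qed.

End CompressedCliquesGraph.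

Theorem mainTheorem3 (T : finType) (e : rel T)
    (e_sym : symmetric e) (e_irr : irreflexive e)
    (K1 K2 : {set {set T}}) :
  is_min_max_clique_covering e K1 -> simple_intersection K1 ->
  is_min_max_clique_covering e K2 -> simple_intersection K2 ->
  ccg_isomorphic K1 K2.
Proof.
move=> K1_min_max K1_simple K2_min_max K2_simple.
have eq_cliques_at12 : {in nonisolated e &, forall x y,
    (cliques_at K1 x == cliques_at K1 y) = (cliques_at K2 x == cliques_at K2 y)}.
  by move=> x y xN yN; rewrite !(eq_cliques_at e_sym e_irr) //.
have [f [f_inj f_im f_cliques]] := imset_transport eq_cliques_at12.
exists f; rewrite !(ccg_vertices_cliques_at e_irr) //; split=> //.
move=> _ _ /imsetP[x xN ->] /imsetP[y yN ->].
by rewrite !f_cliques // !(ccg_adj_cliques_at e_sym e_irr).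
Qed.
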